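(* Let $u_0\in C^1(\Omega_x)\cap\mathcal U$ and suppose $T>0$ is such that the classical solution $u(\cdot,t)=u_0\circ X^{-1}(\cdot,t)$, $t\in\Omega_t$, exists, where $X(x,t)=x+t\,F'(u_0(x))$ is the classical characteristic map (strictly increasing in $x$ for $t\in\Omega_t$). Then for every $K\in\mathbb N$ there is a LRNR $H_r$ with rank $r=3$, degrees of freedom $K$, width $M\sim K$ and depth $L=2$, together with coefficient functions $\gamma(t),\theta(t)$ each of which is linear or constant in $t$, such that $h(t):=h(\gamma(t),\theta(t))\in H_r$ satisfies, for all $t\in\Omega_t$, $$\|u(\cdot,t)-h(t)\|_{L^1(\Omega_x)}\lesssim\frac1K|u_0|_{TV(\Omega_x)}\Big(1+T\|F''\|_{L^\infty(u_0(\Omega_x))}\|u_0'\|_{L^\infty(\Omega_x)}\Big),$$ with an implicit constant independent of $K$, $u_0$, $F$ and $T$.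
   Context: $\Omega_x=(0,1)$, $\Omega_t=(0,T)$, $F\in C^\infty(\mathbb{R})$ strictly convex; $\mathcal U$ is the set of functions of bounded variation on $\Omega_x$ with compact support in $\Omega_x$. $u$ solves $\partial_t u+\partial_x(F(u))=0$, $u(\cdot,0)=u_0$, $u(0,t)=u(1,t)=0$. LRNR (low rank neural representation): fix depth $L$ and widths $M_0=1,M_1,\dots,M_{L-1},M_L=1$, width $M=\max_\ell M_\ell$. A feedforward network is $h(x;W,B)=A^L\circ\sigma\odot A^{L-1}\circ\cdots\circ\sigma\odot A^1(x)$ with $A^\ell(z)=W^\ell z+B^\ell$, $W^\ell\in\mathbb{R}^{M_\ell\times M_{\ell-1}}$, $B^\ell\in\mathbb{R}^{M_\ell}$, and $\sigma(x)=\max\{0,x\}$ applied entrywise. A LRNR of rank $r$ is given by fixed $U_1^\ell,\dots,U_r^\ell$ (weight-shaped) and $V_1^\ell,\dots,V_r^\ell$ (bias-shaped) for each layer $\ell$, each a product $a\bullet b$ of two vectors with $\bullet\in\{\otimes,\otimes_d,{}_d\otimes\}$, where $\otimes$ is the Kronecker product, $a\otimes_d b:=a\otimes\mathrm{diag}(b)$, $a\,{}_d\!\otimes b:=\mathrm{diag}(a)\otimes b$; and coefficient sets $C^\ell,D^\ell\subset\mathbb{R}^r$. Its members are $h(\gamma,\theta):=h(\cdot;W,B)$ with $W^\ell=\sum_{i=1}^r\gamma_i^\ell U_i^\ell$, $B^\ell=\sum_{i=1}^r\theta_i^\ell V_i^\ell$. The degrees of freedom $K$ is the number of stored (unconstrained)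 real parameters defining the $U_i^\ell,V_i^\ell$. *)

From HB Require Import structures.
From mathcomp Require Import all_boot all_order all_algebra.
From mathcomp Require Import all_classical all_reals all_analysis.
Set Implicit Arguments. Unset Strict Implicit. Unset Printing Implicit Defensive.
Import Order.TTheory GRing.Theory Num.Theory.
Import numFieldNormedType.Exports.
Local Open Scope classical_set_scope.
Local Open Scope ring_scope.

Section LRNR.
Variable R : realType.

Definition relu (z : R) : R := Num.max 0 z.

Record nmat := NMat { nrows : nat; ncols : nat; nent : nat -> nat -> R }.

Definition kron (A B : nmat) : nmat :=
  NMat (nrows A * nrows B) (ncols A * ncols B)
    (fun i j => nent A (i %/ nrows B) (j %/ ncols B) * nent B (i %% nrows B) (j %% ncols B)).

Inductive orient := Col | Row.

Definition vmat (o : orient) (a : seq R) : nmat :=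
  match o with
  | Col => NMat (size a) 1 (fun i _ => nth 0 a i)
  | Row => NMat 1 (size a) (fun _ j => nth 0 a j)
  end.

Definition diagm (a : seq R) : nmat :=
  NMat (size a) (size a) (fun i j => if i == j then nth 0 a i else 0).

(** The three products a (x) b, a (x)_d b := a (x) diag b, a _d(x) b := diag a (x) b *)
Inductive prodkind :=
  | PKron of orient & orient
  | PKronD of orient
  | PDKron of orient.

Record vprod := VProd { pkind : prodkind; pa : seq R; pb : seq R }.

Definition pmat (p : vprod) : nmat :=
  match pkind p with
  | PKron oa ob => kron (vmat oa (pa p)) (vmat ob (pb p))
  | PKronD oa => kron (vmat oa (pa p)) (diagm (pb p))
  | PDKron ob => kron (diagm (pa p)) (vmat ob (pb p))
  end.

Definition pdof (p : vprod) : nat := size (pa p) + size (pb p).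

Definition has_shape (p : vprod) (m n : nat) : Prop :=
  nrows (pmat p) = m /\ ncols (pmat p) = n.

(** A depth L = 2, rank r = 3 LRNR: widths M_0 = 1, M_1 = M, M_2 = 1. *)
Record lrnr2 := LRNR2 {
  lwidth : nat;
  U1 : 'I_3 -> vprod;  V1 : 'I_3 -> vprod;
  U2 : 'I_3 -> vprod;  V2 : 'I_3 -> vprod }.

Definition lrnr2_wf (H : lrnr2) : Prop :=
  (0 < lwidth H)%N /\
  forall i : 'I_3,
    has_shape (U1 H i) (lwidth H) 1 /\ has_shape (V1 H i) (lwidth H) 1 /\
    has_shape (U2 H i) 1 (lwidth H) /\ has_shape (V2 H i) 1 1.

Definition lrnr2_dof (H : lrnr2) : nat :=
  (\sum_(i < 3) (pdof (U1 H i) + pdof (V1 H i) + pdof (U2 H i) + pdof (V2 H i)))%N.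

(** the member h(gamma, theta) of the LRNR, evaluated at x:
    h(x) = W^2 sigma(W^1 x + B^1) + B^2, W^l = sum_i gamma^l_i U^l_i,
    B^l = sum_i theta^l_i V^l_i. *)
Definition lrnr2_eval (H : lrnr2) (g1 th1 g2 th2 : 'I_3 -> R) (x : R) : R :=
  let W1 k := \sum_(i < 3) g1 i * nent (pmat (U1 H i)) k 0 in
  let B1 k := \sum_(i < 3) th1 i * nent (pmat (V1 H i)) k 0 in
  let W2 k := \sum_(i < 3) g2 i * nent (pmat (U2 H i)) 0 k in
  let B2 := \sum_(i < 3) th2 i * nent (pmat (V2 H i)) 0 0 in
  \sum_(k < lwidth H) W2 k * relu (W1 k * x + B1 k) + B2.

Definition affc (alpha beta : 'I_3 -> R) (t : R) : 'I_3 -> R :=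
  fun i => alpha i + beta i * t.

Definition TV (f : R -> R) : \bar R :=
  ereal_sup [set e | exists (n : nat) (s : nat -> R),
     [/\ 0 < s 0%N, s n < 1, (forall i, (i < n)%N -> s i < s i.+1) &
         e = (\sum_(i < n) `|f (s i.+1) - f (s i)|)%:E]].

Definition supnorm (g : R -> R) (A : set R) : \bar R :=
  ereal_sup [set (`|g y|)%:E | y in A].

Definition Omx : set R := `]0, 1[%classic.

End LRNR.

(* Discretise [u0] on the grid [i/N] and move the nodes along the characteristics
   [X(x, t) = x + t F'(u0 x)], which carry the values of [u0].  The step function with
   jump [u0((i+1)/N) - u0(i/N)] at [X((i+1)/N, t)] differs from [u(., t)] on the i-th
   transported cell by at most the oscillation of [u0] on [[i/N, (i+1)/N]]; replacing
   each jump by a ReLU ramp of width [1/N] costs the jump times [1/N].  By the mean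
   value theorem a transported cell has length at most [(1 + T |F''| |u0'|) / N], and
   both the oscillations and the jumps add up to at most [TV u0].  The ramps form a
   shallow network with [2N] neurons whose biases [-X((i+1)/N, t)] are affine in [t]. *)

From HB Require Import structures.
From mathcomp Require Import all_boot all_order all_algebra.
From mathcomp Require Import all_classical all_reals all_analysis.
From mathcomp Require Import lra ring zify measurable_realfun.
Import Order.TTheory GRing.Theory Num.Theory.
Import numFieldNormedType.Exports.
Set Implicit Arguments.
Unset Strict Implicit.

Local Open Scope classical_set_scope.
Local Open Scope ring_scope.

Section Variation.
Variable R : realType.
Implicit Types (f : R -> R) (s q : nat -> R).

Lemma var_le_TV f n s : 0 < s 0%N -> s n < 1 -> (forall i, (i < n)%N -> s i < s i.+1) ->
  ((\sum_(i < n) `|f (s i.+1) - f (s i)|)%:E <= TV f)%E.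
Proof. by move=> s0 sn sinc; apply: ereal_sup_ubound; exists n, s. Qed.

Lemma TV_ge0 f : (0 <= TV f)%E.
Proof. by have := @var_le_TV f 0%N (fun=> 1 / 2); rewrite big_ord0; apply=> //; lra. Qed.

Lemma strictify_partition f q m :
  (forall j, 0 < q j < 1) -> (forall j, (j < m)%N -> q j <= q j.+1) ->
  exists n s, [/\ 0 < s 0%N, s n < 1, (forall i, (i < n)%N -> s i < s i.+1), s n = q m &
    \sum_(i < n) `|f (s i.+1) - f (s i)| = \sum_(j < m) `|f (q j.+1) - f (q j)|].
Proof.
move=> q01; elim: m => [|m IH] q_nd.
  have /andP[q0 q1] := q01 0%N.
  by exists 0%N, (fun=> q 0%N); split=> //; rewrite !big_ord0.
have [n [s [s0 sn s_inc snE sumE]]] := IH (fun j jm => q_nd j (ltnW jm)).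
have := q_nd m (ltnSn m); rewrite le_eqVlt => /orP[/eqP qmE|qm_lt].
  exists n, s; split=> //; first by rewrite snE qmE.
  by rewrite big_ord_recr /= -qmE subrr normr0 addr0.
have /andP[_ qm1] := q01 m.+1.
exists n.+1, (fun k => if (k <= n)%N then s k else q m.+1); split=> //.
- by rewrite ltnn.
- move=> i; rewrite ltnS => i_le_n; rewrite i_le_n.
  case: ltnP => [/s_inc //|n_le_i].
  have -> : i = n by apply/eqP; rewrite eqn_leq i_le_n.
  by rewrite snE.
- by rewrite ltnn.
- rewrite big_ord_recr [RHS]big_ord_recr /= ltnn leqnn -sumE snE; congr (_ + _).
  by apply: eq_bigr => i _; rewrite (ltnW (ltn_ord i)) ltn_ord.
Qed.

Lemma var_le_TV_nondecr f q m :
  (forall j, 0 < q j < 1) -> (forall j, (j < m)%N -> q j <= q j.+1) ->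
  ((\sum_(j < m) `|f (q j.+1) - f (q j)|)%:E <= TV f)%E.
Proof.
move=> q01 q_nd; have [n [s [s0 sn s_inc _ <-]]] := @strictify_partition f q m q01 q_nd.
exact: var_le_TV.
Qed.

Section CompactSupport.
Variables (f : R -> R) (a b : R).
Hypotheses (a_gt0 : 0 < a) (a_le_b : a <= b) (b_lt1 : b < 1).
Hypothesis f_supp : forall x, (x < a) || (b < x) -> f x = 0.

(* Moving the points of a partition that lie where [f] vanishes into [(0,1)]
   changes neither the variation of [f] along it nor its monotonicity. *)
Let clamp x := if x < a then a / 2 else if b < x then (b + 1) / 2 else x.

Let f_clamp x : f (clamp x) = f x.
Proof.
have f0 y : y < a \/ b < y -> f y = 0 by move=> h; apply/f_supp/orP.
move: a_gt0 b_lt1 => ? ?; rewrite /clamp.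
case: ltP => [xa|_]; first by rewrite !f0 //; left; lra.
by case: ltP => // bx; rewrite !f0 //; right; lra.
Qed.

Let clamp_in01 x : 0 < clamp x < 1.
Proof.
move: a_gt0 a_le_b b_lt1 => ? ? ?; rewrite /clamp.
by case: (ltP x a) => ?; [|case: (ltP b x) => ?]; apply/andP; split; lra.
Qed.

Let clamp_nondecr x y : x <= y -> clamp x <= clamp y.
Proof.
move: a_gt0 a_le_b b_lt1 => ? ? ?; rewrite /clamp => xy.
by case: (ltP x a) => ?; case: (ltP b x) => ?; case: (ltP y a) => ?;
  case: (ltP b y) => ?; lra.
Qed.

Lemma var_le_TV_support q m : (forall j, (j < m)%N -> q j <= q j.+1) ->
  ((\sum_(j < m) `|f (q j.+1) - f (q j)|)%:E <= TV f)%E.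
Proof.
move=> q_nd; under eq_bigr => j _ do rewrite -[f (q j.+1)]f_clamp -[f (q j)]f_clamp.
by apply: (@var_le_TV_nondecr f (clamp \o q)) => [j|j /q_nd]; [exact: clamp_in01|exact: clamp_nondecr].
Qed.

End CompactSupport.
End Variation.

Section RealAux.
Variable R : realType.

Lemma relu_id (z : R) : 0 <= z -> relu z = z.
Proof. exact: max_r. Qed.

Lemma relu_eq0 (z : R) : z <= 0 -> relu z = 0.
Proof. exact: max_l. Qed.

Definition ramp (eps z : R) := (relu z - relu (z - eps)) / eps.

Lemma dist_step_ramp (eps z : R) : 0 < eps ->
  `|((0 <= z)%R)%:R - ramp eps z| <= ((0 <= z) && (z < eps))%R%:R.
Proof.
move=> eps_gt0; rewrite /ramp.
have [z_lt0|z_ge0] := ltP z 0.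
  by rewrite !relu_eq0 ?subrr ?mul0r ?subr0 ?normr0 //; lra.
have [z_lt|z_ge] := ltP z eps.
  rewrite relu_id // relu_eq0 ?subr0; last lra.
  have ? : 0 <= z / eps by rewrite divr_ge0 // ltW.
  have ? : z / eps < 1 by rewrite ltr_pdivrMr // mul1r.
  by rewrite ger0_norm /=; lra.
rewrite !relu_id ?subr_ge0 // (_ : z - (z - eps) = eps); last by ring.
by rewrite divff ?gt_eqF // subrr normr0.
Qed.

Lemma crossing_index (s : nat -> R) n y : s 0%N <= y -> y < s n ->
  exists j, [/\ (j < n)%N, s j <= y & y < s j.+1].
Proof.
move=> s0y; elim: n => [|n IH] y_lt; first by move: s0y; rewrite leNgt y_lt.
have [y_lt_n|] := ltP y (s n); last by exists n.
by have [j [jn *]] := IH y_lt_n; exists j; split=> //; exact: ltnW.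
Qed.

Lemma sum_jumps_upto (v : nat -> R) n j : (j <= n)%N ->
  \sum_(i < n) (v i.+1 - v i) * (i < j)%:R = v j - v 0%N.
Proof.
move=> jn; rewrite -(telescope_sumr _ (leq0n j)) big_mkord.
transitivity (\sum_(i < n | (i < j)%N) (v i.+1 - v i)); last by rewrite (big_ord_narrow jn).
by rewrite [RHS]big_mkcond; apply: eq_bigr => i _; case: ifP; rewrite (mulr1, mulr0).
Qed.

Lemma sum_ord_double (f : nat -> R) n :
  \sum_(j < n.*2) f j = \sum_(i < n) (f i.*2 + f i.*2.+1).
Proof.
elim: n => [|n IH]; first by rewrite !big_ord0.
by rewrite doubleS !big_ord_recr /= IH addrA.
Qed.

Lemma MVT_between (f df : R -> R) (p q : R) : (forall x : R, is_derive x 1 f (df x)) ->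
  exists2 z, Num.min p q <= z <= Num.max p q & f q - f p = df z * (q - p).
Proof.
move=> f'; have f_cont : continuous f.
  by move=> x; apply/differentiable_continuous/derivable1_diffP; case: (f' x).
have mvt c d : c < d -> exists2 z, c <= z <= d & f d - f c = df z * (d - c).
  move=> cd; have [z + ->] := MVT cd (fun x _ => f' x) (continuous_subspaceT f_cont).
  by rewrite in_itv => /andP[cz zd]; exists z; rewrite ?ltW.
case: (ltgtP p q) => [pq|qp|<-].
- by have [z zin ->] := mvt _ _ pq; exists z.
- have [z zin dE] := mvt _ _ qp; exists z => //.
  by rewrite -opprB dE -mulrN opprB.
- by exists p; rewrite ?lexx // !subrr mulr0.
Qed.

End RealAux.

Section StepIntegral.
Variable R : realType.
Local Notation mu := (@lebesgue_measure R).

(* Unlike [ge0_le_integral], this needs no measurability ([u] is not known to be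
   measurable): the integral of a nonnegative function is a supremum over its
   simple minorants. *)
Lemma ge0_le_integral_nonmeasurable (D : set R) (f g : R -> \bar R) :
  (forall x, D x -> (0 <= f x)%E) -> (forall x, D x -> (f x <= g x)%E) ->
  (\int[mu]_(x in D) f x <= \int[mu]_(x in D) g x)%E.
Proof.
move=> f0 fg; rewrite !ge0_integralE //; last first.
  by move=> x Dx; apply: le_trans (fg _ Dx); exact: f0.
apply: ereal_sup_le => _ [h /= hf <-]; exists h => //= x.
apply: le_trans (hf x) _; rewrite /patch; case: ifP => // /[!inE] Dx.
exact: fg.
Qed.

Lemma integral_sum_indic_le (I : finType) (D : set R) (w l r : I -> R) :
  measurable D -> (forall i, 0 <= w i) -> (forall i, l i <= r i) ->
  (\int[mu]_(y in D) (\sum_i w i * ((l i <= y) && (y < r i))%R%:R)%:E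
   <= (\sum_i w i * (r i - l i))%:E)%E.
Proof.
move=> mD w0 lr.
have indicE i y : ((l i <= y) && (y < r i))%R%:R = \1_(`[l i, r i[) y :> R.
  by rewrite /indic mem_setE in_itv.
have -> : (\int[mu]_(y in D) (\sum_i w i * ((l i <= y) && (y < r i))%R%:R)%:E =
    \int[mu]_(y in D) \sum_i (w i * \1_(`[l i, r i[) y)%:E)%E.
  by apply: eq_integral => y _; rewrite -sumEFin; apply: eq_bigr => i _; rewrite indicE.
rewrite ge0_integral_sum //; first last.
- by move=> i y _; rewrite lee_fin mulr_ge0.
- by move=> i; apply/measurable_EFinP/measurable_funM => //; exact: measurable_indic.
rewrite -sumEFin; apply: lee_sum => i _.
rewrite (@integralZl_indic _ _ _ mu D mD (fun=> [set` `[l i, r i[]) (w i)) //; last first.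
  by move=> wi_lt0; have := w0 i; rewrite leNgt wi_lt0.
rewrite integral_indic // EFinM lee_wpmul2l ?lee_fin //.
have sub_itv : (mu ([set` `[l i, r i[] `&` D) <= mu [set` `[l i, r i[])%E.
  by apply: le_measure; rewrite ?inE //; exact: measurableI.
apply: le_trans sub_itv _.
by rewrite lebesgue_measure_itv /=; case: ifP; rewrite ?EFinB // lee_fin subr_ge0.
Qed.

End StepIntegral.

Section ShallowNetwork.
Variable R : realType.
Variable M : nat.
Variables (w p0 p1 : nat -> R).

Definition colv (f : nat -> R) := VProd (PKron Col Col) (mkseq f M) [:: 1].
Definition rowv (f : nat -> R) := VProd (PKron Row Row) (mkseq f M) [:: 1].

(* Only the first slot of each layer is used, except for [B^1], whose two
   slots carry [p0] and [p1] so that the coefficients [(1, t, 0)] give the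
   time-dependent bias [p0 + t p1]. *)
Definition shallow_lrnr : lrnr2 R := LRNR2 M
  (fun i : 'I_3 => if val i == 0%N then colv (fun=> 1) else colv (fun=> 0))
  (fun i : 'I_3 => if val i == 0%N then colv p0
                   else if val i == 1%N then colv p1 else colv (fun=> 0))
  (fun i : 'I_3 => if val i == 0%N then rowv w else rowv (fun=> 0))
  (fun=> VProd (PKron Col Col) [:: 0] [:: 1]).

Definition bias_const (i : 'I_3) : R := if val i == 1%N then 0 else 1.
Definition bias_slope (i : 'I_3) : R := if val i == 1%N then 1 else 0.

Lemma shallow_lrnr_eval t y :
  lrnr2_eval shallow_lrnr (affc (fun=> 1) (fun=> 0) t) (affc bias_const bias_slope t)
     (affc (fun=> 1) (fun=> 0) t) (affc (fun=> 1) (fun=> 0) t) y =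
  \sum_(k < M) w k * relu (y + (p0 k + t * p1 k)).
Proof.
rewrite /lrnr2_eval /= [X in _ + X](_ : _ = 0); last first.
  by rewrite !big_ord_recr big_ord0 /= /pmat /= !mul0r !mulr0 !addr0.
rewrite addr0; apply: eq_bigr => k _; have kM := ltn_ord k.
rewrite !big_ord_recr !big_ord0 /= /affc /bias_const /bias_slope /=.
rewrite !divn1 !modn1 !nth_mkseq //=.
by congr (_ * relu _); ring.
Qed.

Lemma shallow_lrnr_wf : (0 < M)%N -> lrnr2_wf shallow_lrnr.
Proof.
have colv_shape f : has_shape (colv f) M 1 by rewrite /has_shape /pmat /= size_mkseq !muln1.
have rowv_shape f : has_shape (rowv f) 1 M by rewrite /has_shape /pmat /= size_mkseq !muln1.
move=> M_gt0; split=> // i /=; split; [|split; [|split]] => //.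
- by case: ifP.
- by case: ifP => _; [|case: ifP].
- by case: ifP.
Qed.

Lemma shallow_lrnr_dof : lrnr2_dof shallow_lrnr = (9 * M + 15)%N.
Proof. by rewrite /lrnr2_dof !big_ord_recr big_ord0 /= /pdof /= !size_mkseq; ring. Qed.

End ShallowNetwork.
Arguments bias_const {R}.
Arguments bias_slope {R}.

Lemma Omx_in (R : realType) (y : R) : 0 < y < 1 -> Omx y.
Proof. by rewrite /Omx /= in_itv. Qed.

Lemma supnorm_ge (R : realType) (g : R -> R) (A : set R) y :
  A y -> ((`|g y|)%:E <= supnorm g A)%E.
Proof. by move=> Ay; apply: ereal_sup_ubound; exists y. Qed.

Section Characteristics.
Variable R : realType.
Variables (F u0 : R -> R) (T a b : R).
Hypothesis F'_derivable : forall x : R, derivable (derive1 F) x 1.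
Hypothesis u0_derivable : forall x : R, 0 < x < 1 -> derivable u0 x 1.
Hypotheses (a_gt0 : 0 < a) (a_le_b : a <= b) (b_lt1 : b < 1).
Hypothesis u0_supp : forall x, (x < a) || (b < x) -> u0 x = 0.

Definition charX (t x : R) := x + t * derive1 F (u0 x).

Hypothesis charX_homo_open :
  forall t : R, 0 < t < T -> {in `]0, 1[ &, {homo charX t : x y / x < y}}.

Lemma u0_out x : x <= 0 \/ 1 <= x -> u0 x = 0.
Proof. by move: a_gt0 b_lt1 => ? ? hx; apply/u0_supp/orP; lra. Qed.

Lemma u0_continuous : continuous u0.
Proof.
move=> x; have [xa|ax] := ltP x a.
  apply: (near_cst_continuous 0); near=> y; apply/u0_supp/orP; left.
  by near: y; exact: lt_nbhsl.
have [bx|xb] := ltP b x.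
  apply: (near_cst_continuous 0); near=> y; apply/u0_supp/orP; right.
  by near: y; exact: lt_nbhsr.
apply/differentiable_continuous/derivable1_diffP/u0_derivable.
by move: a_gt0 b_lt1 => ? ?; apply/andP; split; lra.
Unshelve. all: by end_near.
Qed.

Lemma F'_continuous : continuous (derive1 F).
Proof. by move=> x; apply/differentiable_continuous/derivable1_diffP. Qed.

Lemma is_derive_F' (x : R) : is_derive x 1 (derive1 F) (derive1n 2 F x).
Proof. by rewrite /derive1n /= derive1E; exact: derivableP. Qed.

Lemma charX_continuous t : continuous (charX t).
Proof.
move=> x; have -> : charX t = (id + cst t \* (derive1 F \o u0))%R by [].
apply: continuousD; first exact: cvg_id.
apply: continuousM; first exact: cvg_cst.
by apply: continuous_comp; [exact: u0_continuous | exact: F'_continuous].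
Qed.

Lemma charX_homo t : 0 < t < T -> {in `[0, 1] &, {homo charX t : x y / x < y}}.
Proof.
move=> tT x y; rewrite !in_itv /= => /andP[x0 x1] /andP[y0 y1] xy.
have inner z z' : 0 < z < 1 -> 0 < z' < 1 -> z < z' -> charX t z < charX t z'.
  by move=> z01 z'01; apply: charX_homo_open; rewrite ?in_itv.
have flat z : z < a \/ b < z -> charX t z = z + t * derive1 F 0.
  by move=> hz; rewrite /charX u0_supp //; apply/orP.
(* The endpoints are compared with the interior through a point of the zone
   near 0 or 1 where [u0] vanishes and [charX t] is a translation. *)
move: a_gt0 a_le_b b_lt1 => ? ? ?.
case: (ltP 0 x) => x_gt0; case: (ltP y 1) => y_lt1.
- by apply: inner => //; apply/andP; split; lra.
- have zx : x < 1 - (1 - x) * (1 - b) / 2 by nra.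
  apply: (lt_le_trans (inner _ _ _ _ zx)); first (by apply/andP; split; lra);
    first (by apply/andP; split; nra).
  by rewrite !flat; first [nra | right; nra].
- have zy : y * a / 2 < y by nra.
  apply: (le_lt_trans _ (inner _ _ _ _ zy)); last (by apply/andP; split; lra);
    last (by apply/andP; split; nra).
  by rewrite !flat; first [nra | left; nra].
- by rewrite !flat; first [lra | left; lra | right; lra].
Qed.

Lemma u0_image_closed x : 0 <= x <= 1 -> (u0 @` @Omx R) (u0 x).
Proof.
move: a_gt0 a_le_b b_lt1 => ? ? ? /andP[x0 x1].
have [x_in|x_out] := boolP ((0 < x) && (x < 1)); first by exists x; rewrite // Omx_in.
exists (a / 2); first by apply: Omx_in; apply/andP; split; lra.
have -> : u0 (a / 2) = 0 by apply/u0_supp/orP; left; lra.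
rewrite u0_out //; move: x_out; rewrite negb_and -!leNgt => /orP[?|?]; [left|right]; lra.
Qed.

Variable u : R -> R -> R.
Hypothesis u_char : forall t : R, 0 < t < T -> forall x, u (charX t x) t = u0 x.



Definition supF2 := supnorm (derive1n 2 F) (u0 @` @Omx R).
Definition supDu0 := supnorm (derive1 u0) (@Omx R).

(* Bound on the Lipschitz constant of [charX t] for [0 <= t <= T]. *)
Definition lipX := (1 + T%:E * supF2 * supDu0)%E.

Lemma lipX_ge1 : 0 <= T -> (1 <= lipX)%E.
Proof.
move=> T0; have half_in : @Omx R (1 / 2) by apply: Omx_in; apply/andP; split; lra.
rewrite leeDl // !mule_ge0 ?lee_fin //.
  exact: le_trans (supnorm_ge _ (ex_intro2 _ _ _ half_in erefl)).
exact: le_trans (supnorm_ge _ half_in).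
Qed.

Section Grid.
Variable N : nat.
Hypothesis N_gt0 : (0 < N)%N.

Definition grid i : R := i%:R / N%:R.
Definition gridv i := u0 (grid i).
Definition gridX t i := charX t (grid i).

Lemma grid_step i : grid i.+1 - grid i = N%:R^-1.
Proof. by rewrite /grid -mulrBl -natrB // subSnn mul1r. Qed.

Lemma grid_lt i j : (i < j)%N -> grid i < grid j.
Proof. by move=> ij; rewrite /grid ltr_pM2r ?invr_gt0 ?ltr0n // ltr_nat. Qed.

Lemma grid_in01 i : (i <= N)%N -> 0 <= grid i <= 1.
Proof.
move=> iN; rewrite /grid divr_ge0 ?ler0n //=.
by rewrite ler_pdivrMr ?ltr0n // mul1r ler_nat.
Qed.

Lemma grid0 : grid 0 = 0.
Proof. by rewrite /grid mul0r. Qed.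

Lemma gridN : grid N = 1.
Proof. by rewrite /grid divff // pnatr_eq0 -lt0n. Qed.

Lemma gridv0 : gridv 0 = 0.
Proof. by rewrite /gridv grid0 u0_out //; left. Qed.

Lemma gridvN : gridv N = 0.
Proof. by rewrite /gridv gridN u0_out //; right. Qed.

Lemma gridX_le t i j : 0 < t < T -> (i <= j)%N -> (j <= N)%N -> gridX t i <= gridX t j.
Proof.
move=> tT; rewrite leq_eqVlt => /orP[/eqP -> //|ij jN].
apply/ltW/(charX_homo tT); rewrite ?in_itv ?grid_in01 ?(ltnW (leq_trans ij jN)) //.
exact: grid_lt.
Qed.

Lemma u_outside t y : 0 < t < T -> y < gridX t 0 \/ gridX t N <= y -> u y t = 0.
Proof.
have -> : gridX t 0 = t * derive1 F 0 by rewrite /gridX /charX grid0 u0_out ?add0r //; left.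
have -> : gridX t N = 1 + t * derive1 F 0 by rewrite /gridX /charX gridN u0_out //; right.
move=> tT hy; have := u_char tT (y - t * derive1 F 0).
by rewrite /charX u0_out ?subrK //; lra.
Qed.

Lemma u_cell t y j : 0 < t < T -> (j < N)%N -> gridX t j <= y <= gridX t j.+1 ->
  exists2 x, grid j <= x <= grid j.+1 & u y t = u0 x.
Proof.
move=> tT jN /andP[l r].
have jj : grid j <= grid j.+1 by exact/ltW/grid_lt.
have [x + <-] : exists2 x, x \in `[grid j, grid j.+1] & charX t x = y.
  apply: IVT jj (continuous_subspaceT (@charX_continuous t)) _.
  by rewrite ge_min le_max l r orbT.
by rewrite in_itv => x_in; exists x => //; exact: u_char.
Qed.

Definition step_approx t y :=
  \sum_(i < N) (gridv i.+1 - gridv i) * (gridX t i.+1 <= y)%R%:R.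

Definition net_approx t y :=
  \sum_(i < N) (gridv i.+1 - gridv i) * ramp N%:R^-1 (y - gridX t i.+1).

Lemma step_approx_eq t y j : (j <= N)%N ->
  (forall i, (i < N)%N -> (gridX t i.+1 <= y) = (i < j)%N) -> step_approx t y = gridv j.
Proof.
move=> jN Xy; rewrite -[RHS]subr0 -gridv0 -(sum_jumps_upto gridv jN).
by apply: eq_bigr => i _; rewrite Xy.
Qed.

Lemma dist_step_net t y :
  `|step_approx t y - net_approx t y| <= \sum_(i < N) `|gridv i.+1 - gridv i| *
      ((gridX t i.+1 <= y) && (y < gridX t i.+1 + N%:R^-1))%R%:R.
Proof.
rewrite /step_approx /net_approx -sumrB; apply: le_trans (ler_norm_sum _ _ _) _.
apply: ler_sum => i _; rewrite -mulrBr normrM ler_wpM2l //.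
have N_inv_gt0 : 0 < N%:R^-1 :> R by rewrite invr_gt0 ltr0n.
have := dist_step_ramp (y - gridX t i.+1) N_inv_gt0.
by rewrite subr_ge0 ltrBlDr (addrC N%:R^-1).
Qed.

Lemma jump_sum_le_TV : ((\sum_(i < N) `|gridv i.+1 - gridv i|)%:E <= TV u0)%E.
Proof. by apply: (var_le_TV_support a_gt0 a_le_b b_lt1 u0_supp) => j _; exact/ltW/grid_lt. Qed.

Lemma jump_weighted_sum_le : 0 <= T ->
  ((\sum_(i < N) `|gridv i.+1 - gridv i| * N%:R^-1)%:E <= (N%:R^-1)%:E * lipX * TV u0)%E.
Proof.
move=> T0; have n_ge0 : (0 <= (N%:R^-1)%:E :> \bar R)%E by rewrite lee_fin invr_ge0 ler0n.
rewrite -mulr_suml EFinM muleC muleAC.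
apply: (@le_trans _ _ ((N%:R^-1)%:E * TV u0)%E); first by rewrite lee_wpmul2l // jump_sum_le_TV.
by apply: lee_pemulr; [rewrite mule_ge0 ?TV_ge0 | exact: lipX_ge1].
Qed.

Lemma gridv_jump_mvt i : (i < N)%N ->
  exists2 z, @Omx R z & gridv i.+1 - gridv i = derive1 u0 z * N%:R^-1.
Proof.
move=> iN; have /andP[g0 _] := grid_in01 (ltnW iN); have /andP[_ g1] := grid_in01 iN.
have in01 x : grid i < x < grid i.+1 -> 0 < x < 1.
  by case/andP=> ? ?; apply/andP; split; lra.
have u0_der x : x \in `]grid i, grid i.+1[ -> is_derive x 1 u0 (derive1 u0 x).
  by rewrite in_itv derive1E => /in01 /u0_derivable /derivableP.
have [z + ->] := MVT (grid_lt (ltnSn i)) u0_der (continuous_subspaceT u0_continuous).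
by rewrite in_itv => /in01 z01; exists z; rewrite ?grid_step ?Omx_in.
Qed.

Lemma gridX_jump_le t i : 0 < t < T -> (i < N)%N ->
  ((gridX t i.+1 - gridX t i)%:E <= (N%:R^-1)%:E * lipX)%E.
Proof.
move=> /andP[t0 tT] iN; have [z z_in du0] := gridv_jump_mvt iN.
have [c c_in dF'] := MVT_between (gridv i) (gridv i.+1) is_derive_F'.
have c_range : (u0 @` @Omx R) c.
  have [x + <-] := IVT (ltW (grid_lt (ltnSn i))) (continuous_subspaceT u0_continuous) c_in.
  have /andP[? _] := grid_in01 (ltnW iN); have /andP[_ ?] := grid_in01 iN.
  by rewrite in_itv /= => /andP[? ?]; apply: u0_image_closed; apply/andP; split; lra.
have jumpE : gridX t i.+1 - gridX t i =
    N%:R^-1 * (1 + t * (derive1n 2 F c * derive1 u0 z)).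
  have -> : gridX t i.+1 - gridX t i = grid i.+1 - grid i +
      t * (derive1 F (gridv i.+1) - derive1 F (gridv i)) by rewrite /gridX /charX; ring.
  by rewrite dF' du0 grid_step; ring.
set A := `|derive1n 2 F c|; set B := `|derive1 u0 z|.
have jump_le : gridX t i.+1 - gridX t i <= N%:R^-1 * (1 + T * (A * B)).
  rewrite jumpE ler_wpM2l ?invr_ge0 ?ler0n // lerD2l.
  apply: le_trans (ler_norm _) _; rewrite !normrM (gtr0_norm t0).
  by rewrite ler_wpM2r ?mulr_ge0 // ltW.
apply: (le_trans (_ : _ <= (N%:R^-1 * (1 + T * (A * B)))%:E)%E); first by rewrite lee_fin.
rewrite EFinM lee_wpmul2l ?lee_fin ?invr_ge0 ?ler0n // EFinD leeD2l //.
rewrite -muleA EFinM lee_wpmul2l ?lee_fin ?(ltW (lt_trans t0 tT)) // EFinM.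
by apply: lee_pmul; rewrite /A /B ?lee_fin //; [exact: supnorm_ge c_range|exact: supnorm_ge z_in].
Qed.

Section CellMaximizers.
Variable xi : nat -> R.
Hypothesis xi_in : forall i, (i < N)%N -> grid i <= xi i <= grid i.+1.
Hypothesis xi_max : forall i, (i < N)%N -> forall z, grid i <= z <= grid i.+1 ->
  `|u0 z - gridv i| <= `|u0 (xi i) - gridv i|.

Definition osc i := `|u0 (xi i) - gridv i|.

Lemma dist_u_step t y : 0 < t < T ->
  `|u y t - step_approx t y| <=
    \sum_(i < N) osc i * ((gridX t i <= y) && (y < gridX t i.+1))%R%:R.
Proof.
move=> tT.
have rhs_ge0 (P : pred 'I_N) :
    0 <= \sum_(i < N | P i) osc i * ((gridX t i <= y) && (y < gridX t i.+1))%R%:R.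
  by apply: sumr_ge0 => i _; apply: mulr_ge0; rewrite ?normr_ge0 ?ler0n.
have X_le := gridX_le tT.
have [y_lt0|y_ge0] := ltP y (gridX t 0).
  rewrite u_outside //; last by left.
  rewrite (@step_approx_eq t y 0) ?gridv0 ?subrr ?normr0 ?(rhs_ge0 xpredT) //.
  by move=> i iN; apply/negbTE; rewrite -ltNge (lt_le_trans y_lt0) // X_le.
have [y_ltN|y_geN] := ltP y (gridX t N); last first.
  rewrite u_outside //; last by right.
  rewrite (@step_approx_eq t y N) ?gridvN ?subrr ?normr0 ?(rhs_ge0 xpredT) //.
  by move=> i iN; rewrite iN (le_trans _ y_geN) // X_le.
have [j [jN Xj_le y_lt]] := crossing_index y_ge0 y_ltN.
rewrite (@step_approx_eq t y j (ltnW jN)); last first.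
  move=> i iN; case: ltnP => ij; first by rewrite (le_trans _ Xj_le) // X_le // ltnW.
  by apply/negbTE; rewrite -ltNge (lt_le_trans y_lt) // X_le.
have y_in : gridX t j <= y <= gridX t j.+1 by rewrite Xj_le ltW.
have [x x_in ->] := u_cell tT jN y_in.
rewrite (bigD1 (Ordinal jN)) //= Xj_le y_lt mulr1 (le_trans (xi_max jN x_in)) //.
by rewrite lerDl rhs_ge0.
Qed.

Lemma osc_sum_le_TV : ((\sum_(i < N) osc i)%:E <= TV u0)%E.
Proof.
(* Interleave the nodes with the maximizers: [grid 0 <= xi 0 <= grid 1 <= xi 1 <= ...]. *)
pose p j := if odd j then xi j./2 else grid j./2.
have p_nd j : (j < N.*2)%N -> p j <= p j.+1.
  move=> jN; have /xi_in : (j./2 < N)%N by rewrite ltn_half_double.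
  rewrite /p /= uphalf_half; case: (odd j) => /andP[? ?] //=.
have := var_le_TV_support a_gt0 a_le_b b_lt1 u0_supp p_nd; apply: le_trans.
rewrite lee_fin (sum_ord_double (fun j => `|u0 (p j.+1) - u0 (p j)|)).
apply: ler_sum => i _; rewrite /p /= odd_double /= uphalf_half odd_double doubleK.
by rewrite /osc /gridv lerDl.
Qed.

Lemma osc_weighted_sum_le t : 0 < t < T ->
  ((\sum_(i < N) osc i * (gridX t i.+1 - gridX t i))%:E <=
    (N%:R^-1)%:E * lipX * TV u0)%E.
Proof.
move=> tT; have lipX_ge0 : (0 <= (N%:R^-1)%:E * lipX)%E.
  rewrite mule_ge0 ?lee_fin ?invr_ge0 ?ler0n // (le_trans _ (lipX_ge1 _)) //.
  by case/andP: tT => t0 tT; rewrite ltW // (lt_trans t0).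
rewrite -sumEFin; apply: (@le_trans _ _ (\sum_(i < N) (osc i)%:E * ((N%:R^-1)%:E * lipX))%E).
  apply: lee_sum => i _; rewrite EFinM lee_wpmul2l ?lee_fin ?normr_ge0 //.
  exact: gridX_jump_le tT (ltn_ord i).
rewrite -ge0_sume_distrl => [|i _]; last by rewrite lee_fin normr_ge0.
by rewrite sumEFin muleC lee_wpmul2l // osc_sum_le_TV.
Qed.

Lemma integral_dist_u_net t : 0 < t < T ->
  (\int[lebesgue_measure]_(x in @Omx R) (`|u x t - net_approx t x|)%:E <=
    2%:E * (N%:R^-1)%:E * TV u0 * lipX)%E.
Proof.
move=> tT; have T0 : 0 <= T by case/andP: tT => t0 tT; rewrite ltW // (lt_trans t0).
(* Cells [gridX t i, gridX t i.+1[ carry the oscillation of [u0], ramp supports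
   [gridX t i.+1, gridX t i.+1 + 1/N[ the jumps of the step function. *)
pose w (k : 'I_N + 'I_N) :=
  match k with inl i => osc i | inr i => `|gridv i.+1 - gridv i| end.
pose l (k : 'I_N + 'I_N) := match k with inl i => gridX t i | inr i => gridX t i.+1 end.
pose r (k : 'I_N + 'I_N) :=
  match k with inl i => gridX t i.+1 | inr i => gridX t i.+1 + N%:R^-1 end.
apply: (le_trans (ge0_le_integral_nonmeasurable
  (g := fun y => (\sum_k w k * ((l k <= y) && (y < r k))%R%:R)%:E) _ _)).
- by move=> y _; rewrite lee_fin.
- move=> y _; rewrite lee_fin big_sumType /w /l /r /=.
  apply: le_trans (ler_distD (step_approx t y) _ _) _.
  exact: lerD (dist_u_step _ tT) (dist_step_net _ _).
apply: le_trans (integral_sum_indic_le _ _ _) _.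
- exact: measurable_itv.
- by case=> i; rewrite /w /osc normr_ge0.
- case=> i; rewrite /l /r; last by rewrite lerDl invr_ge0.
  exact: gridX_le tT (leqnSn i) (ltn_ord i).
rewrite big_sumType /w /l /r /= EFinD.
have -> : (2%:E * (N%:R^-1)%:E * TV u0 * lipX =
    ((N%:R^-1)%:E * lipX * TV u0) *+ 2)%E.
  by rewrite -mule_natl !muleA (muleAC _ (TV u0)).
rewrite mule2n leeD ?osc_weighted_sum_le //.
under eq_bigr => i _ do rewrite addrAC subrr add0r.
exact: jump_weighted_sum_le.
Qed.

End CellMaximizers.

Lemma exists_cell_maximizers : exists xi : nat -> R, forall i, (i < N)%N ->
  grid i <= xi i <= grid i.+1 /\
  forall z, grid i <= z <= grid i.+1 -> `|u0 z - gridv i| <= `|u0 (xi i) - gridv i|.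
Proof.
suff /choice[xi xiP] : forall i, exists x, (i < N)%N -> grid i <= x <= grid i.+1 /\
  forall z, grid i <= z <= grid i.+1 -> `|u0 z - gridv i| <= `|u0 x - gridv i|.
  by exists xi.
move=> i.
have [c + c_max] := EVT_max (ltW (grid_lt (ltnSn i))) (continuous_subspaceT (fun z =>
  continuous_comp (continuousB (@u0_continuous z) (cvg_cst (gridv i))) (@norm_continuous _ _ _))).
by rewrite in_itv => c_in; exists c => _; split=> // z z_in; apply: c_max; rewrite in_itv.
Qed.

Definition net_weight k := if (k < N)%N then (gridv k.+1 - gridv k) / N%:R^-1
  else - ((gridv (k - N).+1 - gridv (k - N)) / N%:R^-1).
Definition net_bias0 k := if (k < N)%N then - grid k.+1 else - grid (k - N).+1 - N%:R^-1.
Definition net_bias1 k := if (k < N)%N then - derive1 F (gridv k.+1)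
  else - derive1 F (gridv (k - N).+1).

Lemma net_approx_lrnr t y :
  lrnr2_eval (shallow_lrnr (N + N) net_weight net_bias0 net_bias1)
    (affc (fun=> 1) (fun=> 0) t) (affc bias_const bias_slope t)
    (affc (fun=> 1) (fun=> 0) t) (affc (fun=> 1) (fun=> 0) t) y = net_approx t y.
Proof.
rewrite shallow_lrnr_eval /net_approx big_split_ord /= -big_split /=.
apply: eq_bigr => i _; rewrite /net_weight /net_bias0 /net_bias1 /= ltn_ord.
rewrite ltnNge leq_addr /= addKn /ramp /gridX /charX /gridv.
have -> : y + (- grid i.+1 - N%:R^-1 + t * - derive1 F (u0 (grid i.+1))) =
  y - (grid i.+1 + t * derive1 F (u0 (grid i.+1))) - N%:R^-1 by ring.
have -> : y + (- grid i.+1 + t * - derive1 F (u0 (grid i.+1))) =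
  y - (grid i.+1 + t * derive1 F (u0 (grid i.+1))) by ring.
ring.
Qed.

End Grid.

Lemma lrnr_approximation K : (0 < K)%N ->
  exists (H : lrnr2 R) (a1 b1 c1 d1 a2 b2 c2 d2 : 'I_3 -> R),
    lrnr2_wf H /\
    (K%:R <= (33 : R) * (lrnr2_dof H)%:R /\ (lrnr2_dof H)%:R <= (33 : R) * K%:R) /\
    (K%:R <= (33 : R) * (lwidth H)%:R /\ (lwidth H)%:R <= (33 : R) * K%:R) /\
    forall t, 0 < t < T ->
      (\int[lebesgue_measure]_(x in @Omx R)
         (`|u x t - lrnr2_eval H (affc a1 b1 t) (affc c1 d1 t)
                                 (affc a2 b2 t) (affc c2 d2 t) x|)%:E
       <= 2%:E * (K%:R^-1)%:E * TV u0 * lipX)%E.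
Proof.
move=> K0; have [xi xiP] := exists_cell_maximizers K0.
exists (shallow_lrnr (K + K) (net_weight K) (net_bias0 K) (net_bias1 K)),
  (fun=> 1), (fun=> 0), bias_const, bias_slope, (fun=> 1), (fun=> 0), (fun=> 1), (fun=> 0).
split; first by apply: shallow_lrnr_wf; rewrite addn_gt0 K0.
split; first by rewrite shallow_lrnr_dof -!natrM !ler_nat; split; lia.
split; first by rewrite /= -!natrM !ler_nat; split; lia.
move=> t tT; under eq_integral => x _ do rewrite net_approx_lrnr.
apply: (integral_dist_u_net K0) tT => i iK; [exact: (xiP i iK).1 | exact: (xiP i iK).2].
Qed.

End Characteristics.

Theorem theorem4p6 (R : realType) :
  exists (C c : R), 0 < C /\ 0 < c /\
  forall (F : R -> R) (u0 : R -> R) (T : R) (u : R -> R -> R),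
    (forall (n : nat) (x : R), derivable (derive1n n F) x 1) ->
    (forall x y l : R, x != y -> 0 < l -> l < 1 ->
       F (l * x + (1 - l) * y) < l * F x + (1 - l) * F y) ->
    (forall x : R, 0 < x < 1 -> derivable u0 x 1) ->
    {within (@Omx R), continuous derive1 u0} ->
    (exists a b : R, [/\ 0 < a, b < 1 & forall x, (x < a) || (b < x) -> u0 x = 0]) ->
    (TV u0 < +oo)%E ->
    0 < T ->
    (forall t : R, 0 < t < T ->
       {in `]0, 1[ &, {homo (fun x => x + t * derive1 F (u0 x)) : x y / x < y}}) ->
    (forall t : R, 0 < t < T -> forall x : R, u (x + t * derive1 F (u0 x)) t = u0 x) ->
    forall K : nat, (0 < K)%N ->
    exists (H : lrnr2 R) (a1 b1 c1 d1 a2 b2 c2 d2 : 'I_3 -> R),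
      lrnr2_wf H /\
      (K%:R <= c * (lrnr2_dof H)%:R /\ (lrnr2_dof H)%:R <= c * K%:R) /\
      (K%:R <= c * (lwidth H)%:R /\ (lwidth H)%:R <= c * K%:R) /\
      forall t : R, 0 < t < T ->
            (\int[lebesgue_measure]_(x in (@Omx R))
                (`| u x t - lrnr2_eval H (affc a1 b1 t) (affc c1 d1 t)
                                        (affc a2 b2 t) (affc c2 d2 t) x |)%:E
             <= C%:E * (K%:R^-1)%:E * TV u0 *
                (1 + T%:E * supnorm (derive1n 2 F) (u0 @` (@Omx R))
                          * supnorm (derive1 u0) (@Omx R)))%E.
Proof.
exists 2, 33; split; first lra; split; first lra.
move=> F u0 T u F_smooth _ u0_der _ [a0 [b0 [a0_gt0 b0_lt1 supp0]]] _ _ X_homo u_char K K0.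
have [a [b [a_gt0 a_le_b b_lt1 supp]]] : exists a b : R,
    [/\ 0 < a, a <= b, b < 1 & forall x, (x < a) || (b < x) -> u0 x = 0].
  case: (leP a0 b0) => ab; first by exists a0, b0.
  exists (1 / 4), (1 / 2); split; try lra.
  by move=> x _; apply: supp0; case: (ltP x a0) => //= ?; lra.
by have := lrnr_approximation (F_smooth 1%N) u0_der a_gt0 a_le_b b_lt1 supp X_homo u_char K0.
Qed.
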